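(* For every $N\ge3$ and every $\lambda\in(0,1]$, the matrix $M(\lambda)$ is primitive (some power of it has all entries strictly positive).
   Context: Fix an integer $N\ge 3$. Let $\mathcal G_N$ be the groupoid with object set $\{1,\dots,N\}$ generated by arrows $A_{i,j}^{(k)}$, $i\neq j\in\{1,\dots,N\}$, $k\in\{-1,1\}$, with source $i$ and target $j$, subject to the relations $A_{i,j}^{(k)}A_{j,\ell}^{(k)}=A_{i,\ell}^{(k)}$ for all $i,j,\ell$, $k$, with the convention $A_{i,i}^{(k)}:=e_i$ (unit at object $i$). Let $\mathcal A$ be its arrow set. Let $\{W_n\}_{n\ge0}$ be the Markov chain on $\mathcal A$ with $P(W_{n+1}=y\mid W_n=x)=p_{i,j}^{(k)}$ if $x^{-1}y=A_{i,j}^{(k)}$ with $i\ne j$ and $0$ otherwise, where $p_{i,j}^{(k)}\in(0,1)$ and $\sum_{j\ne i}\sum_{k=\pm1}p_{i,j}^{(k)}=1$ for each $i$; $E_x$ denotes expectation with $W_0=x$. For $x\in\mathcal A$ let $T(0,x)=\inf\{n\ge0:W_n=W_0x\}$ (possibly $\infty$) and $R_{i,j}^{(k)}(\lambda)=E_{e_i}[\lambda^{T(0,A_{i,j}^{(k)})}]$. $M(\lambda)$ is the $2N(N-1)\times2N(N-1)$ matrix with rows and columns indexed by triples $(i,j,k)$, $i\ne j$, $k\in\{\pm1\}$, whose entry in row $(i,j,k)$ and column $(i',j',k')$ is: $\lambda p_{i,i'}^{(k)}$ if $i'\notin\{i,j\}$, $j'=j$, $k'=k$; $\lambda p_{i,i'}^{(-k)}R_{i,j}^{(k)}(\lambda)$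 if $i'\ne i$, $j'=i$, $k'=-k$; $\lambda\sum_{\ell\neq i}p_{i,\ell}^{(-k)}R_{\ell,i}^{(-k)}(\lambda)$ if $(i',j',k')=(i,j,k)$; and $0$ otherwise. *)

From HB Require Import structures.
From mathcomp Require Import all_boot all_order all_algebra.
From mathcomp Require Import all_classical all_reals all_analysis.
Set Implicit Arguments. Unset Strict Implicit. Unset Printing Implicit Defensive.
Import Order.TTheory GRing.Theory Num.Theory.
Import numFieldNormedType.Exports.
Local Open Scope ring_scope.

(* Objects of the groupoid G_N are 'I_N (i.e. 0..N-1 instead of 1..N).
   The sign k in {-1,1} is encoded as a bool: true = +1, false = -1,
   so -k is ~~ k.

   Arrows of G_N are represented by their normal form: an arrow with source s
   is a reduced word  A_{s,a1}^{(k1)} A_{a1,a2}^{(k2)} ... A_{a_{m-1},a_m}^{(km)}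
   with consecutive letters of alternating type (k_{l+1} = - k_l) and
   a_{l} <> a_{l+1}; the empty word is the unit e_s.  We store the list of
   letters (a_l, k_l) in REVERSED order (most recent letter first). *)

Section Groupoid.
Variable N : nat.
Notation obj := 'I_N.
Notation letter := (obj * bool)%type.

Definition tgt (s : obj) (rw : seq letter) : obj :=
  if rw is x :: _ then x.1 else s.

(* right multiplication of the arrow (s, rw) by the generator A_{t,j}^{(k)},
   t = tgt s rw, using the relations A^{(k)}_{a,b} A^{(k)}_{b,c} = A^{(k)}_{a,c}
   and A^{(k)}_{t,t} = e_t. *)
Definition mulgen (s : obj) (rw : seq letter) (x : letter) : seq letter :=
  if x.1 == tgt s rw then rw else
  match rw with
  | [::] => [:: x]
  | y :: rest =>
      if y.2 == x.2 then
        (if x.1 == tgt s rest then rest else x :: rest)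
      else x :: rw
  end.

Variable R : realType.
Variable p : obj -> obj -> bool -> R.

(* probability that, being at an arrow with target t, the walk multiplies
   on the right by A_{t,j}^{(k)} (zero if j = t: no such step exists) *)
Definition stepw (t : obj) (x : letter) : R :=
  if x.1 == t then 0 else p t x.1 x.2.

Fixpoint pathw (s : obj) (rw : seq letter) (c : seq letter) : R :=
  match c with
  | [::] => 1
  | x :: c' => stepw (tgt s rw) x * pathw s (mulgen s rw x) c'
  end.

Fixpoint firsthit (s : obj) (rw : seq letter) (tw : seq letter) (c : seq letter)
  : bool :=
  match c with
  | [::] => rw == tw
  | x :: c' => (rw != tw) && firsthit s (mulgen s rw x) tw c'
  end.

(* P_{e_i}( T(0, A_{i,j}^{(k)}) = n ) : W_0 = e_i, target W_0 x = A_{i,j}^{(k)} *)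
Definition hitprob (i j : obj) (k : bool) (n : nat) : R :=
  \sum_(c : n.-tuple letter) pathw i [::] c * (firsthit i [::] [:: (j, k)] c)%:R.

(* R_{i,j}^{(k)}(lambda) = E_{e_i}[lambda^T] = sum_n lambda^n P(T = n)
   (convention lambda^infinity = 0) *)
Definition Rgen (lam : R) (i j : obj) (k : bool) : R :=
  limn (series (fun n : nat => lam ^+ n * hitprob i j k n)).

Definition Idx := {x : obj * obj * bool | x.1.1 != x.1.2}.

Definition Mentry (lam : R) (a b : Idx) : R :=
  let: (i, j, k) := val a in
  let: (i', j', k') := val b in
  if (i' != i) && (i' != j) && (j' == j) && (k' == k) then lam * p i i' k
  else if (i' != i) && (j' == i) && (k' == ~~ k) then
    lam * p i i' (~~ k) * Rgen lam i j k
  else if (i' == i) && (j' == j) && (k' == k) then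
    lam * \sum_(l : obj | l != i) p i l (~~ k) * Rgen lam l i (~~ k)
  else 0.

Definition Mmat (lam : R) : 'M[R]_#|{: Idx}| :=
  \matrix_(a, b) Mentry lam (enum_val a) (enum_val b).

End Groupoid.

Definition primitive_mx (R : realType) (n : nat) (A : 'M[R]_n) : Prop :=
  exists m : nat, forall a b, 0 < (A ^+ m) a b.

(** The matrix M(λ) is entrywise nonnegative.  Its diagonal is positive, and
    so are its "backtracking" entries (i,j,k) -> (i',i,-k), because λ > 0 and
    every R_{i,j}^{(k)}(λ) is positive: the walk can reach A_{i,j}^{(k)} in a
    single step.  Chaining backtracking moves (i,j,k) -> (x,i,-k) -> (y,x,k)
    -> (d,y,-k) -> (c,d,k), with x and y chosen fresh, which is possible as
    N >= 3, connects any two indices of the same sign in four steps; indices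
    of opposite sign are connected by three such moves and one loop.  Hence
    M(λ)^4 has all entries positive. *)

From HB Require Import structures.
From mathcomp Require Import all_boot all_order all_algebra.
From mathcomp Require Import all_classical all_reals all_analysis.
From mathcomp Require Import zify.
Set Implicit Arguments. Unset Strict Implicit. Unset Printing Implicit Defensive.
Import Order.TTheory GRing.Theory Num.Theory.
Import numFieldNormedType.Exports.
Local Open Scope ring_scope.

Lemma sum_tuple0 (V : nmodType) (T : finType) (F : 0.-tuple T -> V) :
  \sum_(c : 0.-tuple T) F c = F [tuple].
Proof.
by rewrite (big_pred1 [tuple]) // => c; apply/esym/eqP/val_inj; case: c => -[].
Qed.

Lemma sum_tupleS (V : nmodType) (T : finType) n (F : n.+1.-tuple T -> V) :
  \sum_(c : n.+1.-tuple T) F c =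
  \sum_(x : T) \sum_(t : n.-tuple T) F [tuple of x :: t].
Proof.
rewrite pair_bigA (reindex (fun q : T * n.-tuple T => [tuple of q.1 :: q.2])) //.
apply: onW_bij; exists (fun t => (thead t, [tuple of behead t])) => [[x t]|t] /=.
  by rewrite theadE; congr pair; apply: val_inj.
by rewrite -tuple_eta.
Qed.

Lemma nnseries_le_lim (R : realType) (u : R ^nat) (M : R) :
  (forall n, 0 <= u n) -> (forall n, series u n <= M) ->
  forall n, u n <= limn (series u).
Proof.
move=> u_ge0 u_le n.
have u_nd : nondecreasing_seq (series u) by apply: nondecreasing_series.
have u_cvg : cvgn (series u).
  by apply: nondecreasing_is_cvgn => //; exists M => _ [m _ <-].
apply: le_trans (nondecreasing_cvgn_le u_nd u_cvg n.+1).
by rewrite seriesSr lerDr seriesEord sumr_ge0.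
Qed.

Lemma exists_neq2 (T : finType) (a b : T) :
  (2 < #|T|)%N -> exists z : T, (z != a) && (z != b).
Proof.
move=> T_gt2; have /card_gt0P[z] : (0 < #|~: [set a; b]|)%N.
  by move: (cardsC [set a; b]); rewrite cards2; lia.
by rewrite !inE negb_or => zab; exists z.
Qed.

Section MatrixPowers.
Variables (R : numDomainType) (n : nat) (A : 'M[R]_n).
Hypothesis A_ge0 : forall a b, 0 <= A a b.

Lemma mxpow_ge0 m a b : 0 <= (A ^+ m) a b.
Proof.
elim: m a b => [|m IHm] a b; first by rewrite expr0 mxE mulrn_wge0.
by rewrite exprS -mulmxE mxE sumr_ge0 // => c _; rewrite mulr_ge0.
Qed.

Lemma mxpow_path_gt0 a s :
  path (fun x y => 0 < A x y) a s -> 0 < (A ^+ size s) a (last a s).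
Proof.
elim: s a => [|x s IHs] a /=; first by rewrite expr0 mxE eqxx.
case/andP=> Aax /IHs Ax_gt0; rewrite exprS -mulmxE mxE (bigD1 x) //=.
by rewrite ltr_wpDr ?mulr_gt0 // sumr_ge0 // => c _; rewrite mulr_ge0 ?mxpow_ge0.
Qed.

End MatrixPowers.

Section FirstPassage.
Variables (R : realType) (N : nat) (p : 'I_N -> 'I_N -> bool -> R).
Hypothesis p_gt0 : forall i j k, i != j -> 0 < p i j k.
Hypothesis p_sum1 : forall i, \sum_(j | j != i) \sum_k p i j k = 1.
Local Notation letter := ('I_N * bool)%type.

Lemma stepw_ge0 t x : 0 <= stepw p t x.
Proof. by rewrite /stepw; case: eqP => // /eqP xt; rewrite ltW // p_gt0 // eq_sym. Qed.

Lemma stepw_sum1 t : \sum_(x : letter) stepw p t x = 1.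
Proof.
rewrite -(p_sum1 t) -(pair_bigA _ (fun j k => stepw p t (j, k))) /=.
rewrite (bigID (fun j => j != t)) /= [X in _ + X]big1 ?addr0 => [|j /negPn jt].
  by apply: eq_bigr => j jt; apply: eq_bigr => k _; rewrite /stepw /= (negbTE jt).
by apply: big1 => k _; rewrite /stepw /= jt.
Qed.

Lemma pathw_ge0 s rw c : 0 <= pathw p s rw c.
Proof. by elim: c rw => [|x c IHc] rw //=; rewrite mulr_ge0 ?stepw_ge0. Qed.

(* [hitprob] started from an arbitrary arrow (s, rw) rather than from the unit
   e_s, so that it satisfies the first-step recursion [hitwS]. *)
Definition hitw s rw tw n :=
  \sum_(c : n.-tuple letter) pathw p s rw c * (firsthit s rw tw c)%:R.

Lemma hitw_ge0 s rw tw n : 0 <= hitw s rw tw n.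
Proof. by rewrite sumr_ge0 // => c _; rewrite mulr_ge0 ?pathw_ge0. Qed.

Lemma hitw0 s rw tw : hitw s rw tw 0 = (rw == tw)%:R.
Proof. by rewrite /hitw sum_tuple0 /= mul1r. Qed.

Lemma hitwS s rw tw n : hitw s rw tw n.+1 =
  (rw != tw)%:R * \sum_x stepw p (tgt s rw) x * hitw s (mulgen s rw x) tw n.
Proof.
rewrite /hitw sum_tupleS mulr_sumr; apply: eq_bigr => x _.
rewrite !mulr_sumr; apply: eq_bigr => c _ /=.
by case: (rw != tw); rewrite /= ?mul1r ?mul0r ?mulr0 ?mulrA.
Qed.

Lemma sum_hitw_le1 M s rw tw : \sum_(n < M) hitw s rw tw n <= 1.
Proof.
elim: M s rw => [|M IHM] s rw; first by rewrite big_ord0 ler01.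
rewrite big_ord_recl hitw0; have [->|rw_tw] := eqVneq rw tw.
  by rewrite big1 ?addr0 // => n _; rewrite hitwS eqxx mul0r.
under eq_bigr => n _ do rewrite hitwS rw_tw mul1r.
rewrite add0r exchange_big /= -(stepw_sum1 (tgt s rw)) ler_sum // => x _.
by rewrite -mulr_sumr ler_piMr ?stepw_ge0.
Qed.

Lemma hitprob1_gt0 i j k : i != j -> 0 < hitprob p i j k 1.
Proof.
move=> ij; rewrite [hitprob _ _ _ _ _]hitwS mul1r (bigD1 (j, k)) //=.
rewrite ltr_wpDr ?sumr_ge0 // => [x _|]; first by rewrite mulr_ge0 ?stepw_ge0 ?hitw_ge0.
by rewrite hitw0 /stepw /mulgen /= eq_sym (negbTE ij) eqxx mulr1 p_gt0.
Qed.

Lemma Rgen_gt0 (lam : R) i j k : 0 < lam <= 1 -> i != j -> 0 < Rgen p lam i j k.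
Proof.
move=> /andP[lam_gt0 lam_le1] ij.
pose u n := lam ^+ n * hitprob p i j k n.
have hit_ge0 m : 0 <= hitprob p i j k m by exact: (hitw_ge0 i [::] [:: (j, k)] m).
have u_ge0 m : 0 <= u m by rewrite /u mulr_ge0 ?exprn_ge0 ?hit_ge0 // ltW.
have u_le1 m : series u m <= 1.
  apply: le_trans (sum_hitw_le1 m i [::] [:: (j, k)]).
  rewrite seriesEord ler_sum // => l _.
  by apply: ler_piMl; [exact: hit_ge0 | exact: exprn_ile1 (ltW lam_gt0) lam_le1].
apply: lt_le_trans (nnseries_le_lim u_ge0 u_le1 1).
by rewrite /u expr1 mulr_gt0 ?hitprob1_gt0.
Qed.

End FirstPassage.

Section TransitionMatrix.
Variables (R : realType) (N : nat) (p : 'I_N -> 'I_N -> bool -> R) (lam : R).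
Hypothesis N_gt2 : (2 < N)%N.
Hypothesis p_gt0 : forall i j k, i != j -> 0 < p i j k.
Hypothesis p_sum1 : forall i, \sum_(j | j != i) \sum_k p i j k = 1.
Hypothesis lam01 : 0 < lam <= 1.

Let lam_gt0 : 0 < lam. Proof. by case/andP: lam01. Qed.

Let Rgen_lam_gt0 i j k : i != j -> 0 < Rgen p lam i j k.
Proof. exact: (Rgen_gt0 p_gt0 p_sum1 k lam01). Qed.

Let p_gt0_sym i i' k : i' != i -> 0 < p i i' k.
Proof. by rewrite eq_sym; apply: p_gt0. Qed.

Definition idx (i j : 'I_N) (k : bool) (ij : i != j) : Idx N := exist _ (i, j, k) ij.

Lemma Mentry_ge0 a b : 0 <= Mentry p lam a b.
Proof.
case: a => -[[i j] k] /= ij; case: b => -[[i' j'] k'] ?; rewrite /Mentry /=.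
case: ifP => [/andP[/andP[/andP[i'i _] _] _]|_]; first by rewrite ltW ?mulr_gt0 ?p_gt0_sym.
case: ifP => [/andP[/andP[i'i _] _]|_]; first by rewrite ltW ?mulr_gt0 ?p_gt0_sym ?Rgen_lam_gt0.
case: ifP => _ //; rewrite mulr_ge0 ?(ltW lam_gt0) // sumr_ge0 // => l li.
by rewrite ltW ?mulr_gt0 ?p_gt0_sym ?Rgen_lam_gt0.
Qed.

Lemma Mentry_diag_gt0 a : 0 < Mentry p lam a a.
Proof.
case: a => -[[i j] k] /= ij; rewrite /Mentry /= !eqxx /= mulr_gt0 //.
rewrite (bigD1 j) 1?eq_sym //= ltr_wpDr ?mulr_gt0 ?p_gt0_sym ?Rgen_lam_gt0 // 1?eq_sym //.
by rewrite sumr_ge0 // => l /andP[li _]; rewrite ltW ?mulr_gt0 ?p_gt0_sym ?Rgen_lam_gt0.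
Qed.

Lemma Mentry_backtrack_gt0 i j i' k (ij : i != j) (i'i : i' != i) :
  0 < Mentry p lam (idx k ij) (idx (~~ k) i'i).
Proof.
rewrite /Mentry /= (negbTE ij) andbF /= i'i !eqxx /=.
by rewrite !mulr_gt0 ?p_gt0_sym ?Rgen_lam_gt0.
Qed.

Lemma Mentry_walk4 u v : exists s : seq (Idx N),
  [/\ size s = 4%N, last u s = v & path (fun a b => 0 < Mentry p lam a b) u s].
Proof.
have N_card : (2 < #|'I_N|)%N by rewrite card_ord.
case: u => -[[a b] k] /= ab; case: v => -[[c d] k'] /= cd.
have [->|/negPf k'k] := eqVneq k' (~~ k).
  have [x /andP[xa xd]] := exists_neq2 a d N_card; rewrite eq_sym in xd.
  exists [:: idx k ab; idx (~~ k) xa; idx (~~ ~~ k) xd; idx (~~ ~~ ~~ k) cd].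
  by rewrite /= Mentry_diag_gt0 !Mentry_backtrack_gt0 !negbK.
have {k'k} -> : k' = k by case: k k' k'k => -[].
have [x /andP[xa _]] := exists_neq2 a a N_card.
have [y /andP[yx yd]] := exists_neq2 x d N_card; rewrite eq_sym in yd.
exists [:: idx (~~ k) xa; idx (~~ ~~ k) yx; idx (~~ ~~ ~~ k) yd;
  idx (~~ ~~ ~~ ~~ k) cd].
by rewrite /= !Mentry_backtrack_gt0 !negbK.
Qed.

Lemma Mmat_ge0 a b : 0 <= Mmat p lam a b.
Proof. by rewrite mxE Mentry_ge0. Qed.

Lemma Mmat_pow4_gt0 a b : 0 < (Mmat p lam ^+ 4) a b.
Proof.
have [s [s_size s_last s_path]] := Mentry_walk4 (enum_val a) (enum_val b).
have := mxpow_path_gt0 Mmat_ge0 (a := enum_rank (enum_val a)) (s := map enum_rank s).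
rewrite path_map size_map s_size last_map s_last !enum_valK; apply.
apply: sub_path s_path => x y xy.
have : 0 < Mmat p lam (enum_rank x) (enum_rank y) by rewrite mxE !enum_rankK.
exact.
Qed.

End TransitionMatrix.

Theorem lemmaA1 (R : realType) (N : nat) (p : 'I_N -> 'I_N -> bool -> R)
  (lam : R) :
  (2 < N)%N ->
  (forall (i j : 'I_N) (k : bool), i != j -> 0 < p i j k < 1) ->
  (forall i : 'I_N, \sum_(j : 'I_N | j != i) \sum_(k : bool) p i j k = 1) ->
  0 < lam <= 1 ->
  primitive_mx (Mmat p lam).
Proof.
move=> N_gt2 p_bounds p_sum1 lam01.
have p_gt0 i j k : i != j -> 0 < p i j k by move/(p_bounds i j k)/andP=> [].
by exists 4%N; apply: Mmat_pow4_gt0.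
Qed.
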